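(* Let $R$ be a unital associative superalgebra over $\Bbbk$ and $n\geqslant 2$. Then the Lie superalgebra $\mathfrak{sq}_n(R)$ is perfect, i.e. $[\mathfrak{sq}_n(R),\mathfrak{sq}_n(R)]=\mathfrak{sq}_n(R)$, and $$\mathfrak{sq}_n(R)=\left\{\begin{pmatrix}A&B\\\rho(B)&\rho(A)\end{pmatrix}: A,B\in\mathrm{M}_n(R),\ \mathrm{Tr}(B)\in[R,R]\right\}.$$
   Context: $\Bbbk$ is a unital commutative associative ring in which $2$ is invertible; $|x|$ denotes parity. $[R,R]$ is the $\Bbbk$-span of super-commutators $ab-(-1)^{|a||b|}ba$ of homogeneous $a,b\in R$. $\mathfrak{gl}_{n|n}(R)$ is the Lie superalgebra of $2n\times 2n$ matrices over $R$ with the matrix unit $e_{ij}(a)$ of parity $|i|+|j|+|a|$ ($|i|=0$ for $i\leqslant n$, $|i|=1$ for $i>n$) and bracket $[X,Y]=XY-(-1)^{|X||Y|}YX$. For homogeneous $a\in R$, $\rho(a)=(-1)^{|a|}a$ (extended linearly), applied entrywise to matrices. $\mathfrak{q}_n(R)=\left\{\begin{pmatrix}A&B\\\rho(B)&\rho(A)\end{pmatrix}: A,B\in \mathrm{M}_n(R)\right\}\subseteq\mathfrak{gl}_{n|n}(R)$ and $\mathfrak{sq}_n(R)=[\mathfrak{q}_n(R),\mathfrak{q}_n(R)]$. *)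

From HB Require Import structures.
From mathcomp Require Import all_boot all_order all_algebra.
Set Implicit Arguments. Unset Strict Implicit. Unset Printing Implicit Defensive.
Import GRing.Theory.
Local Open Scope ring_scope.

(* A Z/2-grading R = R_0 (+) R_1 of a unital associative k-algebra R,
   given by the k-linear projection [ev] onto R_0 along R_1.
   R_0 = {x | ev x = x}, R_1 = {x | ev x = 0}. *)
Record superalgebra (k : comPzRingType) (R : algType k) := SuperAlgebra {
  ev : R -> R;
  ev_linear : forall (c : k) (x y : R), ev (c *: x + y) = c *: ev x + ev y;
  ev_idem : forall x, ev (ev x) = ev x;
  ev_one : ev 1 = 1;
  ev_mul00 : forall x y, ev x = x -> ev y = y -> ev (x * y) = x * y;
  ev_mul01 : forall x y, ev x = x -> ev y = 0 -> ev (x * y) = 0;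
  ev_mul10 : forall x y, ev x = 0 -> ev y = y -> ev (x * y) = 0;
  ev_mul11 : forall x y, ev x = 0 -> ev y = 0 -> ev (x * y) = x * y
}.

Section Defs.
Variables (k : comPzRingType) (R : algType k) (S : superalgebra R).

(* a is homogeneous of parity b (false = even, true = odd) *)
Definition homog (b : bool) (a : R) : Prop :=
  if b then ev S a = 0 else ev S a = a.

(* rho(a0 + a1) = a0 - a1 *)
Definition rho (a : R) : R := ev S a - (a - ev S a).

Definition kspan (V : nmodType) (sc : k -> V -> V) (P : V -> Prop) (x : V) : Prop :=
  exists (m : nat) (c : 'I_m -> k) (v : 'I_m -> V),
    (forall i, P (v i)) /\ x = \sum_(i < m) sc (c i) (v i).

Definition scommR (x : R) : Prop :=
  exists (pa pb : bool) (a b : R), homog pa a /\ homog pb b /\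
    x = a * b - (if pa && pb then -1 else 1) * (b * a).

Definition commRR : R -> Prop := kspan (fun c (a : R) => c *: a) scommR.

Variable n : nat.

Definition gl := 'M[R]_(n + n).

(* parity of a row/column index: |i| = 0 for i < n (0-based), 1 otherwise *)
Definition ipar (i : 'I_(n + n)) : bool := (n <= i)%N.

Definition homog_mx (p : bool) (X : gl) : Prop :=
  forall i j, homog (p (+) ipar i (+) ipar j) (X i j).

Definition kscale (c : k) (X : gl) : gl := map_mx (fun a => c *: a) X.

Definition sbracket (p q : bool) (X Y : gl) : gl :=
  X *m Y - (if p && q then -1 else 1) *: (Y *m X).

Definition qmat (A B : 'M[R]_n) : gl :=
  block_mx A B (map_mx rho B) (map_mx rho A).

Definition in_q (X : gl) : Prop := exists A B, X = qmat A B.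

Definition brackets (P : gl -> Prop) (Z : gl) : Prop :=
  exists (p q : bool) (X Y : gl),
    P X /\ P Y /\ homog_mx p X /\ homog_mx q Y /\ Z = sbracket p q X Y.

Definition lie_comm (P : gl -> Prop) : gl -> Prop := kspan kscale (brackets P).

Definition in_sq : gl -> Prop := lie_comm in_q.

End Defs.

From Pilot Require Import Defs.
From HB Require Import structures.
From mathcomp Require Import all_boot all_order all_algebra.
Set Implicit Arguments. Unset Strict Implicit. Unset Printing Implicit Defensive.
Import GRing.Theory.
Local Open Scope ring_scope.

(* Write X = qmat A B for the elements of q_n(R), and let T be the set of
   such X with tr B in [R,R].  We prove the chain
        [sq_n(R), sq_n(R)]  <=  sq_n(R)  <=  T  <=  [sq_n(R), sq_n(R)],
   which gives both statements of the theorem at once.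

   - sq_n(R) <= T: the odd block of a bracket [qmat A B, qmat C D] of
     homogeneous elements is AD + B rho(C) -+ (CB + D rho(A)); since rho acts
     on homogeneous matrices by a sign, its trace is a signed sum of
     supertrace differences tr(MN) -+ tr(NM), which lie in [R,R].
   - T <= [sq_n(R), sq_n(R)] (this needs n >= 2 and 1/2 in k): explicit
     bracket identities between block matrix units e_ij(a) show that all even
     units, all odd off-diagonal units, the odd differences e_ii(b) - e_jj(b)
     and the odd units e_i0i0([a,b]) are in the derived algebra; every element
     of T is a sum of such elements.
   - [sq_n(R), sq_n(R)] <= sq_n(R) because sq_n(R) <= T <= q_n(R). *)

Section Span.
Variables (k : comPzRingType) (V : zmodType) (sc : k -> V -> V).
Hypotheses (scD : forall c x y, sc c (x + y) = sc c x + sc c y)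
  (scA : forall c d x, sc c (sc d x) = sc (c * d) x)
  (sc1 : forall x, sc 1 x = x).

Lemma sc0 c : sc c 0 = 0.
Proof. by apply: (addrI (sc c 0)); rewrite -scD !addr0. Qed.

Lemma kspan_in (P : V -> Prop) x : P x -> kspan sc P x.
Proof.
by move=> Px; exists 1%N, (fun _ => 1), (fun _ => x); rewrite big_ord1 sc1.
Qed.

Lemma kspan0 (P : V -> Prop) : kspan sc P 0.
Proof. by exists 0%N, (fun _ => 1), (fun _ => 0); rewrite big_ord0; split => [[]|]. Qed.

Lemma kspan_add (P : V -> Prop) x y :
  kspan sc P x -> kspan sc P y -> kspan sc P (x + y).
Proof.
move=> [m1 [c1 [v1 [H1 ->]]]] [m2 [c2 [v2 [H2 ->]]]].
exists (m1 + m2)%N, (fun i => match split i with inl a => c1 a | inr b => c2 b end),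
  (fun i => match split i with inl a => v1 a | inr b => v2 b end); split.
  by move=> i; case: split.
by rewrite big_split_ord; congr (_ + _); apply: eq_bigr => i _;
  [rewrite (unsplitK (inl i))|rewrite (unsplitK (inr i))].
Qed.

Lemma kspan_scale (P : V -> Prop) c x : kspan sc P x -> kspan sc P (sc c x).
Proof.
move=> [m [c1 [v1 [H1 ->]]]]; exists m, (fun i => c * c1 i), v1; split => //.
by rewrite (big_morph (sc c) (scD c) (sc0 c)); apply: eq_bigr => i _; apply: scA.
Qed.

Lemma kspan_ind (P Q : V -> Prop) : Q 0 -> (forall x y, Q x -> Q y -> Q (x + y)) ->
  (forall c x, Q x -> Q (sc c x)) -> (forall x, P x -> Q x) ->
  forall x, kspan sc P x -> Q x.
Proof.
move=> Q0 QD QZ PQ x [m [c [v [Pv ->]]]].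
by apply: (big_ind Q) => // i _; apply/QZ/PQ.
Qed.

Lemma kspan_mono (P Q : V -> Prop) : (forall x, P x -> Q x) ->
  forall x, kspan sc P x -> kspan sc Q x.
Proof.
move=> PQ; apply: kspan_ind; [exact: kspan0|exact: kspan_add|exact: kspan_scale|].
by move=> x /PQ; apply: kspan_in.
Qed.

End Span.

Section Signs.
Variable R : pzRingType.

Definition sgn (b : bool) : R := if b then -1 else 1.

Lemma sgn_addb_mul p q a b :
  sgn (p (+) q) * (a * b) = (sgn p * a) * (sgn q * b).
Proof. by case: p; case: q; rewrite /sgn /= ?mul1r ?mulN1r ?mulrN ?mulNr ?opprK. Qed.

Lemma mulmx_sgn b n (M N : 'M[R]_n) : M *m (sgn b *: N) = sgn b *: (M *m N).
Proof. by case: b; rewrite /sgn !(scale1r, scaleN1r) ?mulmxN. Qed.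

End Signs.

Section MatrixUnits.
Variables (R : pzRingType) (n : nat).

Definition munit (i j : 'I_n) (a : R) : 'M[R]_n :=
  \matrix_(r, c) (if (r == i) && (c == j) then a else 0).

Lemma munit_mul i j l m a b :
  munit i j a *m munit l m b = if j == l then munit i m (a * b) else 0.
Proof.
apply/matrixP => r c; rewrite !mxE (bigD1 j) //= big1 ?addr0; last first.
  by move=> t /negbTE tj; rewrite !mxE tj andbF mul0r.
rewrite !mxE eqxx andbT; have [jl|jl] := eqVneq j l; last by rewrite mulr0 mxE.
by subst l; rewrite mxE; case: (r == i); case: (c == m); rewrite ?mulr0 ?mul0r.
Qed.

Lemma munitD i j a b : munit i j (a + b) = munit i j a + munit i j b.
Proof. by apply/matrixP => r c; rewrite !mxE; case: ifP; rewrite ?addr0. Qed.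
Lemma munitN i j a : munit i j (- a) = - munit i j a.
Proof. by apply/matrixP => r c; rewrite !mxE; case: ifP; rewrite ?oppr0. Qed.
Lemma munit0 i j : munit i j 0 = 0.
Proof. by apply/matrixP => r c; rewrite !mxE; case: ifP. Qed.
Lemma scale_munit i j (s a : R) : s *: munit i j a = munit i j (s * a).
Proof. by apply/matrixP => r c; rewrite !mxE; case: ifP; rewrite ?mulr0. Qed.

Lemma munit_decomp (M : 'M[R]_n) : M = \sum_i \sum_j munit i j (M i j).
Proof.
apply/matrixP => r c; rewrite summxE (bigD1 r) //= summxE (bigD1 c) //= !mxE !eqxx /=.
rewrite big1 ?addr0; last by move=> t /negbTE tc; rewrite mxE eqxx /= eq_sym tc.
rewrite big1 ?addr0 // => t /negbTE tr; rewrite summxE big1 // => u _.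
by rewrite mxE eq_sym tr.
Qed.

End MatrixUnits.

Section Parity.
Variables (k : comPzRingType) (R : algType k) (S : superalgebra R).
Local Notation ev := (ev S).
Local Notation rho := (rho S).
Local Notation homog := (homog S).
Local Notation sgn := (@sgn R).

Lemma evD x y : ev (x + y) = ev x + ev y.
Proof. by have := ev_linear S 1 x y; rewrite !scale1r. Qed.
Lemma ev0 : ev 0 = 0.
Proof. by apply: (addrI (ev 0)); rewrite -evD !addr0. Qed.
Lemma evZ c x : ev (c *: x) = c *: ev x.
Proof. by have := ev_linear S c x 0; rewrite !addr0 ev0 addr0. Qed.
Lemma evN x : ev (- x) = - ev x.
Proof. by rewrite -scaleN1r evZ scaleN1r. Qed.

Lemma homog0 b : homog b 0.
Proof. by case: b; rewrite /Defs.homog ev0. Qed.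
Lemma homogD b x y : homog b x -> homog b y -> homog b (x + y).
Proof. by case: b; rewrite /Defs.homog evD => -> ->; rewrite ?addr0. Qed.
Lemma homogN b x : homog b x -> homog b (- x).
Proof. by case: b; rewrite /Defs.homog evN => ->; rewrite ?oppr0. Qed.
Lemma homog1 : homog false 1.
Proof. exact: ev_one. Qed.
Lemma homogM p q a b : homog p a -> homog q b -> homog (p (+) q) (a * b).
Proof.
case: p; case: q; rewrite /Defs.homog /= => ha hb.
- exact: ev_mul11.
- exact: ev_mul10.
- exact: ev_mul01.
- exact: ev_mul00.
Qed.
Lemma homog_sgn b p a : homog p a -> homog p (sgn b * a).
Proof. by case: b; rewrite /sgn ?mul1r ?mulN1r //; apply: homogN. Qed.

Lemma homog_split (P : R -> Prop) :
  (forall x y, P x -> P y -> P (x + y)) -> (forall b a, homog b a -> P a) ->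
  forall a, P a.
Proof.
move=> PD Ph a; rewrite -[a](subrK (ev a)) addrC; apply: PD.
  by apply: (Ph false); apply: ev_idem.
by apply: (Ph true); rewrite /Defs.homog evD evN ev_idem subrr.
Qed.

Lemma rho_homog b a : homog b a -> rho a = sgn b * a.
Proof.
by case: b; rewrite /Defs.rho /Defs.homog /sgn => ->;
  rewrite ?subr0 ?sub0r ?subrr ?subr0 ?mulN1r ?mul1r.
Qed.
Lemma rhoE2 a : rho a = ev a *+ 2 - a.
Proof. by rewrite /Defs.rho opprB addrA mulr2n. Qed.
Lemma rhoD x y : rho (x + y) = rho x + rho y.
Proof. by rewrite !rhoE2 evD mulrnDl opprD addrACA. Qed.
Lemma rho0 : rho 0 = 0.
Proof. by rewrite rhoE2 ev0 mul0rn subr0. Qed.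
Lemma rhoN x : rho (- x) = - rho x.
Proof. by rewrite !rhoE2 evN mulNrn opprB opprK addrC. Qed.
Lemma rhoZ c x : rho (c *: x) = c *: rho x.
Proof. by rewrite !rhoE2 evZ scalerBr scalerMnr. Qed.
Lemma rho1 : rho 1 = 1.
Proof. by rewrite (rho_homog homog1) mul1r. Qed.
Lemma rhoK x : rho (rho x) = x.
Proof.
have ev_rho : ev (rho x) = ev x by rewrite /Defs.rho !(evD, evN) ev_idem subrr subr0.
by rewrite [rho (rho x)]rhoE2 ev_rho rhoE2 opprB addrC subrK.
Qed.
Lemma rhoM x y : rho (x * y) = rho x * rho y.
Proof.
elim/homog_split: x => [x1 x2 IH1 IH2|p a ha].
  by rewrite mulrDl !rhoD IH1 IH2 -mulrDl.
elim/homog_split: y => [y1 y2 IH1 IH2|q b hb].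
  by rewrite mulrDr !rhoD IH1 IH2 -mulrDr.
by rewrite (rho_homog (homogM ha hb)) (rho_homog ha) (rho_homog hb) sgn_addb_mul.
Qed.
Lemma homog_rho b a : homog b a -> homog b (rho a).
Proof. by move=> h; rewrite (rho_homog h); apply: homog_sgn. Qed.

Lemma commRR0 : commRR S 0.
Proof. exact: kspan0. Qed.
Lemma commRR_add x y : commRR S x -> commRR S y -> commRR S (x + y).
Proof. exact: kspan_add. Qed.
Lemma commRR_scale c x : commRR S x -> commRR S (c *: x).
Proof. by apply: kspan_scale => *; rewrite ?scalerDr ?scalerA. Qed.
Lemma commRR_sgn b x : commRR S x -> commRR S (sgn b * x).
Proof.
by case: b; rewrite /sgn ?mul1r // mulN1r -scaleN1r; apply: commRR_scale.
Qed.
Lemma commRR_sum (I : Type) (r : seq I) (P : pred I) (F : I -> R) :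
  (forall i, P i -> commRR S (F i)) -> commRR S (\sum_(i <- r | P i) F i).
Proof. by move=> hF; apply: big_ind => //; [exact: commRR0|exact: commRR_add]. Qed.
Lemma commRR_scomm pa pb a b : homog pa a -> homog pb b ->
  commRR S (a * b - sgn (pa && pb) * (b * a)).
Proof. by move=> ha hb; apply: kspan_in; [exact: scale1r|exists pa, pb, a, b]. Qed.

End Parity.

Section Matrices.
Variables (k : comPzRingType) (R : algType k) (S : superalgebra R) (n : nat).
Local Notation rho := (rho S).
Local Notation homog := (homog S).
Local Notation sgn := (@sgn R).
Local Notation mrho := (map_mx rho).
Local Notation mks c := (map_mx (fun x : R => c *: x)).
Local Notation Q := (@qmat _ _ S n).

Lemma kscale_munit (i j : 'I_n) (c : k) a : mks c (munit i j a) = munit i j (c *: a).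
Proof. by apply/matrixP => r t; rewrite !mxE; case: ifP; rewrite ?scaler0. Qed.
Lemma mxrho_munit (i j : 'I_n) a : mrho (munit i j a) = munit i j (rho a).
Proof. by apply/matrixP => r t; rewrite !mxE; case: ifP; rewrite ?rho0. Qed.

Lemma mxrhoD (A B : 'M[R]_n) : mrho (A + B) = mrho A + mrho B.
Proof. by apply/matrixP => r c; rewrite !mxE rhoD. Qed.
Lemma mxrhoN (A : 'M[R]_n) : mrho (- A) = - mrho A.
Proof. by apply/matrixP => r c; rewrite !mxE rhoN. Qed.
Lemma mxrho0 : mrho (0 : 'M[R]_n) = 0.
Proof. by apply/matrixP => r c; rewrite !mxE rho0. Qed.
Lemma mxrhoZ (s : R) (A : 'M[R]_n) : mrho (s *: A) = rho s *: mrho A.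
Proof. by apply/matrixP => r c; rewrite !mxE rhoM. Qed.
Lemma mxrhoK (A : 'M[R]_n) : mrho (mrho A) = A.
Proof. by apply/matrixP => r c; rewrite !mxE rhoK. Qed.
Lemma mxrhoM (A B : 'M[R]_n) : mrho (A *m B) = mrho A *m mrho B.
Proof.
apply/matrixP => r c; rewrite !mxE (big_morph rho (@rhoD _ _ S) (rho0 S)).
by apply: eq_bigr => i _; rewrite rhoM !mxE.
Qed.
Lemma mxrho_kscale (c : k) (A : 'M[R]_n) : mks c (mrho A) = mrho (mks c A).
Proof. by apply/matrixP => r t; rewrite !mxE rhoZ. Qed.

Lemma qmatD A B C D : Q A B + Q C D = Q (A + C) (B + D).
Proof. by rewrite /qmat add_block_mx !mxrhoD. Qed.
Lemma qmatN A B : - Q A B = Q (- A) (- B).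
Proof. by rewrite /qmat opp_block_mx !mxrhoN. Qed.
Lemma qmat0 : Q 0 0 = 0.
Proof. by rewrite /qmat mxrho0 block_mx0. Qed.
Lemma qmat_sgn b A B : sgn b *: Q A B = Q (sgn b *: A) (sgn b *: B).
Proof.
have rho_sgn : rho (sgn b) = sgn b by case: b; rewrite /sgn ?rhoN rho1.
by rewrite /qmat scale_block_mx !mxrhoZ rho_sgn.
Qed.
Lemma kscale_qmat c A B : kscale c (Q A B) = Q (mks c A) (mks c B).
Proof. by rewrite /kscale /qmat map_block_mx !mxrho_kscale. Qed.
Lemma qmat_mul A B C D :
  Q A B *m Q C D = Q (A *m C + B *m mrho D) (A *m D + B *m mrho C).
Proof.
rewrite /qmat mulmx_block !mxrhoD !mxrhoM !mxrhoK.
by rewrite [mrho B *m C + _]addrC [mrho B *m D + _]addrC.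
Qed.

Lemma sbracket_qmat p q A B C D :
  sbracket p q (Q A B) (Q C D) =
  Q (A *m C + B *m mrho D - sgn (p && q) *: (C *m A + D *m mrho B))
    (A *m D + B *m mrho C - sgn (p && q) *: (C *m B + D *m mrho A)).
Proof. by rewrite /sbracket !qmat_mul qmat_sgn qmatN qmatD. Qed.

Definition hmx (p : bool) (M : 'M[R]_n) : Prop := forall r c, homog p (M r c).

Lemma hmx0 p : hmx p 0.
Proof. by move=> r c; rewrite mxE; apply: homog0. Qed.
Lemma hmxD p M N : hmx p M -> hmx p N -> hmx p (M + N).
Proof. by move=> hM hN r c; rewrite mxE; apply: homogD. Qed.
Lemma hmxN p M : hmx p M -> hmx p (- M).
Proof. by move=> hM r c; rewrite mxE; apply: homogN. Qed.
Lemma hmx_munit p i j a : homog p a -> hmx p (munit i j a).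
Proof. by move=> ha r c; rewrite mxE; case: ifP => _ //; apply: homog0. Qed.
Lemma hmx_rho p M : hmx p M -> hmx p (mrho M).
Proof. by move=> hM r c; rewrite mxE; apply: homog_rho. Qed.
Lemma mxrho_hmx p M : hmx p M -> mrho M = sgn p *: M.
Proof. by move=> hM; apply/matrixP => r c; rewrite !mxE (rho_homog (hM r c)). Qed.

Lemma ipar_l (i : 'I_n) : ipar (lshift n i) = false.
Proof. by rewrite /ipar /= leqNgt ltn_ord. Qed.
Lemma ipar_r (i : 'I_n) : ipar (rshift n i) = true.
Proof. by rewrite /ipar /= leq_addr. Qed.

Lemma homog_qmat p A B : hmx p A -> hmx (~~ p) B -> homog_mx S p (Q A B).
Proof.
move=> hA hB i j; rewrite /qmat -(splitK i) -(splitK j).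
case: (split i) => i'; case: (split j) => j' /=;
  rewrite ?ipar_l ?ipar_r ?block_mxEul ?block_mxEur ?block_mxEdl ?block_mxEdr.
- by rewrite !addbF; apply: hA.
- by rewrite addbF addbT; apply: hB.
- by rewrite addbF addbT; apply: hmx_rho.
- by rewrite addbT addbT negbK; apply: hmx_rho.
Qed.

Lemma homog_qmatP p A B : homog_mx S p (Q A B) -> hmx p A /\ hmx (~~ p) B.
Proof.
move=> h; split => r c.
  by have := h (lshift n r) (lshift n c); rewrite /qmat block_mxEul !ipar_l !addbF.
by have := h (lshift n r) (rshift n c); rewrite /qmat block_mxEur ipar_l ipar_r addbF addbT.
Qed.

Lemma tr_scomm a b M N : hmx a M -> hmx b N ->
  commRR S (\tr (M *m N) - sgn (a && b) * \tr (N *m M)).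
Proof.
move=> hM hN.
have trMN : \tr (M *m N) = \sum_i \sum_l M i l * N l i.
  by apply: eq_bigr => i _; rewrite mxE.
have trNM : \tr (N *m M) = \sum_i \sum_l N l i * M i l.
  by rewrite [RHS]exchange_big; apply: eq_bigr => l _; rewrite mxE.
rewrite trMN trNM mulr_sumr -sumrB; apply: commRR_sum => i _.
by rewrite mulr_sumr -sumrB; apply: commRR_sum => l _; apply: commRR_scomm.
Qed.

Lemma tr_bracket_odd p q A B C D : hmx p A -> hmx (~~ p) B -> hmx q C -> hmx (~~ q) D ->
  commRR S (\tr (A *m D + B *m mrho C - sgn (p && q) *: (C *m B + D *m mrho A))).
Proof.
move=> hA hB hC hD; rewrite (mxrho_hmx hA) (mxrho_hmx hC) !mulmx_sgn.
rewrite -scaleNr mxtraceD !mxtraceZ !mxtraceD !mxtraceZ.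
have := commRR_add (tr_scomm hA hD) (commRR_sgn q (tr_scomm hB hC)).
move: (\tr (A *m D)) (\tr (D *m A)) (\tr (B *m C)) (\tr (C *m B)) => ad da bc cb.
case: p q {hA hB hC hD} => [] []; rewrite /sgn /=;
  rewrite ?(mul1r, mulN1r, mulrN, mulNr, opprK, opprD, mulrBr, mulrDr, addrA);
  by move=> h; rewrite addrAC (addrAC ad).
Qed.

End Matrices.

Section TraceForm.
Variables (k : comPzRingType) (R : algType k) (S : superalgebra R) (n : nat).
Local Notation Q := (@qmat _ _ S n).
Local Notation mks c := (map_mx (fun x : R => c *: x)).

Definition in_qtr (X : gl R n) : Prop :=
  exists A B, X = Q A B /\ commRR S (\tr B).

Lemma qtr0 : in_qtr 0.
Proof. by exists 0, 0; rewrite qmat0 mxtrace0; split => //; apply: commRR0. Qed.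

Lemma qtrD X Y : in_qtr X -> in_qtr Y -> in_qtr (X + Y).
Proof.
move=> [A [B [-> hB]]] [C [D [-> hD]]]; exists (A + C), (B + D).
by rewrite qmatD mxtraceD; split => //; apply: commRR_add.
Qed.

Lemma qtr_kscale c X : in_qtr X -> in_qtr (kscale c X).
Proof.
move=> [A [B [-> hB]]]; rewrite kscale_qmat; exists (mks c A), (mks c B); split => //.
have -> : \tr (mks c B) = c *: \tr B.
  by rewrite /mxtrace scaler_sumr; apply: eq_bigr => i _; rewrite mxE.
exact: commRR_scale.
Qed.

Lemma qtr_bracket p q X Y : in_q S X -> in_q S Y -> homog_mx S p X -> homog_mx S q Y ->
  in_qtr (sbracket p q X Y).
Proof.
move=> [A [B ->]] [C [D ->]] /homog_qmatP [hA hB] /homog_qmatP [hC hD].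
by rewrite sbracket_qmat; eexists; eexists; split; [|apply: tr_bracket_odd hD].
Qed.

Lemma sq_sub_qtr X : in_sq S X -> in_qtr X.
Proof.
apply: kspan_ind; [exact: qtr0|exact: qtrD|exact: qtr_kscale|].
by move=> Z [p [q [X1 [Y1 [qX [qY [hX [hY ->]]]]]]]]; apply: qtr_bracket.
Qed.

Lemma sq_sub_q (X : gl R n) : in_sq S X -> in_q S X.
Proof. by case/sq_sub_qtr => A [B [-> _]]; exists A, B. Qed.

End TraceForm.

Section Generation.
Variables (k : comPzRingType) (R : algType k) (S : superalgebra R) (n : nat).
Local Notation homog := (homog S).
Local Notation rho := (rho S).
Local Notation sgn := (@sgn R).
Local Notation Q := (@qmat _ _ S n).
Local Notation QA A := (Q A 0).
Local Notation QB B := (Q 0 B).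
Local Notation munit := (@munit R n).

Local Notation dsq := (lie_comm S (in_sq S (n:=n))).

Lemma kscaleD c (X Y : gl R n) : kscale c (X + Y) = kscale c X + kscale c Y.
Proof. by apply/matrixP => r t; rewrite !mxE scalerDr. Qed.
Lemma kscaleA c d (X : gl R n) : kscale c (kscale d X) = kscale (c * d) X.
Proof. by apply/matrixP => r t; rewrite !mxE scalerA. Qed.
Lemma kscale1 (X : gl R n) : kscale 1 X = X.
Proof. by apply/matrixP => r t; rewrite !mxE scale1r. Qed.

Lemma dsq0 : dsq 0.
Proof. exact: kspan0. Qed.
Lemma dsqD X Y : dsq X -> dsq Y -> dsq (X + Y).
Proof. exact: kspan_add. Qed.
Lemma dsq_kscale c X : dsq X -> dsq (kscale c X).
Proof. by apply: kspan_scale => *; rewrite ?kscaleD ?kscaleA. Qed.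
Lemma dsqN X : dsq X -> dsq (- X).
Proof.
have -> : - X = kscale (-1) X by apply/matrixP => r t; rewrite !mxE scaleN1r.
exact: dsq_kscale.
Qed.

Lemma sq_bracket p q A B C D : homog_mx S p (Q A B) -> homog_mx S q (Q C D) ->
  in_sq S (sbracket p q (Q A B) (Q C D)).
Proof.
move=> hX hY; apply: kspan_in; first exact: kscale1.
by exists p, q, (Q A B), (Q C D); do !split => //; [exists A, B|exists C, D].
Qed.
Lemma dsq_bracket p q (X Y : gl R n) : in_sq S X -> in_sq S Y ->
  homog_mx S p X -> homog_mx S q Y -> dsq (sbracket p q X Y).
Proof. by move=> *; apply: kspan_in; [exact: kscale1|exists p, q, X, Y]. Qed.

(* Since sq_n(R) lies in q_n(R), so does its derived algebra. *)
Lemma dsq_sub_sq X : dsq X -> in_sq S X.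
Proof.
apply: kspan_mono => [c x y|c d x|x|]; rewrite ?kscaleD ?kscaleA ?kscale1 //.
move=> Z [p [q [X1 [Y1 [sqX [sqY [hX [hY ->]]]]]]]].
by exists p, q, X1, Y1; do !split => //; apply: sq_sub_q.
Qed.

Lemma homog_QA p A : hmx S p A -> homog_mx S p (QA A).
Proof. by move=> h; apply: homog_qmat => //; apply: hmx0. Qed.
Lemma homog_QB p B : hmx S p B -> homog_mx S (~~ p) (QB B).
Proof. by move=> h; apply: homog_qmat; [apply: hmx0|rewrite negbK]. Qed.
Lemma QAD A B : QA (A + B) = QA A + QA B.
Proof. by rewrite qmatD addr0. Qed.
Lemma QBD A B : QB (A + B) = QB A + QB B.
Proof. by rewrite qmatD addr0. Qed.

Local Ltac simpq :=
  rewrite ?sbracket_qmat ?mxrho0 ?mxrho_munit ?rho1 ?mxrhoD ?mxrhoN ?mxrho_munit ?rho1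
    ?mulmxBl ?mulmxBr ?mul0mx ?mulmx0 ?munit_mul ?eqxx /=;
  rewrite ?addr0 ?add0r ?scaler0 ?subr0 ?sub0r ?oppr0 ?mulr1 ?mul1r ?andbF ?andbT.

Section OffDiagonal.
Variables (i j : 'I_n).
Hypothesis ij : i != j.
Let ji : j != i. Proof. by rewrite eq_sym. Qed.

(* Off-diagonal units of either block are brackets in q_n(R):
   e_ij(a) = [e_ii(a), e_ij(1)] in the even block,
   e_ij(b) = [e_ii(1), e_ij(b)] with the second factor in the odd block. *)
Lemma sq_even_unit p a : homog p a -> in_sq S (QA (munit i j a)).
Proof.
move=> ha; have -> : QA (munit i j a) = sbracket p false (QA (munit i i a)) (QA (munit i j 1)).
  by simpq; rewrite (negbTE ji) /= scale1r subr0.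
by apply: sq_bracket; apply: homog_QA; apply: hmx_munit => //; apply: homog1.
Qed.

Lemma sq_odd_unit p b : homog p b -> in_sq S (QB (munit i j b)).
Proof.
move=> hb; have -> : QB (munit i j b) = sbracket false (~~ p) (QA (munit i i 1)) (QB (munit i j b)).
  by simpq; rewrite (negbTE ji) /= scale1r subr0.
apply: sq_bracket; last by apply: homog_QB; apply: hmx_munit.
by apply: homog_QA; apply: hmx_munit; apply: homog1.
Qed.

(* h_ij = e_ii(1) - e_jj(1) = [e_ij(1), e_ji(1)] in the even block. *)
Lemma sq_cartan : in_sq S (QA (munit i i 1 - munit j j 1)).
Proof.
have -> : QA (munit i i 1 - munit j j 1) =
    sbracket false false (QA (munit i j 1)) (QA (munit j i 1)).
  by simpq; rewrite scale1r.
by apply: sq_bracket; apply: homog_QA; apply: hmx_munit; apply: homog1.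
Qed.
End OffDiagonal.

(* From here on 2 is invertible in k, which lets us halve brackets. *)
Variable h : k.
Hypothesis h2 : 2%:R * h = 1.

Lemma dsq_half X : dsq (X + X) -> dsq X.
Proof.
move=> dXX; have hh : h + h = 1 by rewrite -h2 mulr_natl mulr2n.
have -> : X = kscale h (X + X).
  by apply/matrixP => r t; rewrite !mxE scalerDr -scalerDl hh scale1r.
exact: dsq_kscale.
Qed.

Section DerivedOffDiagonal.
Variables (i j : 'I_n).
Hypothesis ij : i != j.
Let ji : j != i. Proof. by rewrite eq_sym. Qed.
Let hH : hmx S false (munit i i 1 - munit j j 1).
Proof. by apply: hmxD; [|apply: hmxN]; apply: hmx_munit; apply: homog1. Qed.

(* 2 e_ij(a) = [h_ij, e_ij(a)] in the even block. *)
Lemma dsq_even_unit p a : homog p a -> dsq (QA (munit i j a)).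
Proof.
move=> ha; apply: dsq_half; rewrite -QAD.
have -> : QA (munit i j a + munit i j a) =
    sbracket false p (QA (munit i i 1 - munit j j 1)) (QA (munit i j a)).
  by simpq; rewrite (negbTE ji) /= !scale1r !subr0 sub0r opprK.
apply: dsq_bracket; [exact: sq_cartan|exact: (sq_even_unit ij ha)|exact: homog_QA|].
by apply: homog_QA; apply: hmx_munit.
Qed.

(* 2 e_ij(b) = [h_ij, e_ij(b)] in the odd block. *)
Lemma dsq_odd_unit p b : homog p b -> dsq (QB (munit i j b)).
Proof.
move=> hb; apply: dsq_half; rewrite -QBD.
have -> : QB (munit i j b + munit i j b) =
    sbracket false (~~ p) (QA (munit i i 1 - munit j j 1)) (QB (munit i j b)).
  by simpq; rewrite (negbTE ji) /= ?scale1r ?subr0 ?sub0r ?opprK.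
apply: dsq_bracket; [exact: sq_cartan|exact: (sq_odd_unit ij hb)|exact: homog_QA|].
by apply: homog_QB; apply: hmx_munit.
Qed.

(* 2 e_ii(a) = [e_ij(a), e_ji(1)]_even + [e_ij(a), e_ji(1)]_odd. *)
Lemma dsq_even_diag p a : homog p a -> dsq (QA (munit i i a)).
Proof.
move=> ha; apply: dsq_half; rewrite -QAD.
have -> : munit i i a + munit i i a =
    (munit i i a - munit j j a) + (munit i i a + munit j j a).
  by rewrite addrACA addNr addr0.
rewrite QAD; apply: dsqD.
  have -> : QA (munit i i a - munit j j a) =
      sbracket p false (QA (munit i j a)) (QA (munit j i 1)).
    by simpq; rewrite scale1r.
  apply: dsq_bracket; [exact: (sq_even_unit ij ha)|exact: (sq_even_unit ji (homog1 S))| |].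
    by apply: homog_QA; apply: hmx_munit.
  by apply: homog_QA; apply: hmx_munit; apply: homog1.
have -> : QA (munit i i a + munit j j a) =
    sbracket (~~ p) true (QB (munit i j a)) (QB (munit j i 1)).
  simpq; rewrite scale_munit (rho_homog ha).
  by case: (p); rewrite /sgn /= ?mul1r ?mulN1r ?munitN ?opprK.
apply: dsq_bracket; [exact: (sq_odd_unit ij ha)|exact: (sq_odd_unit ji (homog1 S))| |].
  by apply: homog_QB; apply: hmx_munit.
by apply: (homog_QB (p := false)); apply: hmx_munit; apply: homog1.
Qed.

(* e_ii(b) - e_jj(b) = [e_ij(1), e_ji(b)] in the odd block. *)
Lemma dsq_odd_diff p b : homog p b -> dsq (QB (munit i i b - munit j j b)).
Proof.
move=> hb.
have -> : QB (munit i i b - munit j j b) =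
    sbracket false (~~ p) (QA (munit i j 1)) (QB (munit j i b)).
  by simpq; rewrite ?scale1r ?subr0 ?sub0r ?opprK.
apply: dsq_bracket; [exact: (sq_even_unit ij (homog1 S))|exact: (sq_odd_unit ji hb)| |].
  by apply: homog_QA; apply: hmx_munit; apply: homog1.
by apply: homog_QB; apply: hmx_munit.
Qed.

(* The odd unit e_ii([a,b]) for a supercommutator [a,b]: it differs from
   the bracket [e_ij(a), e_ji(b)] by an odd diagonal difference. *)
Lemma dsq_odd_scomm pa pb a b : homog pa a -> homog pb b ->
  dsq (QB (munit i i (a * b - sgn (pa && pb) * (b * a)))).
Proof.
move=> ha hb; set y := sgn (pa && pb) * (b * a).
have hy : homog (pb (+) pa) y by apply: homog_sgn; apply: homogM.
have -> : QB (munit i i (a * b - y)) =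
   sbracket pa (~~ pb) (QA (munit i j a)) (QB (munit j i b))
   + - QB (munit i i y - munit j j y).
  simpq.
  have -> : sgn (pa && ~~ pb) *: munit j j (b * rho a) = munit j j y.
    rewrite scale_munit (rho_homog ha) /y /sgn.
    by case: (pa); case: (pb); rewrite /= ?mul1r ?mulN1r ?mulrN ?opprK.
  by rewrite qmatN qmatD oppr0 addr0 munitD munitN opprB addrA subrK.
apply: dsqD; last by apply: dsqN; apply: (dsq_odd_diff hy).
apply: dsq_bracket; [exact: (sq_even_unit ij ha)|exact: (sq_odd_unit ji hb)| |].
  by apply: homog_QA; apply: hmx_munit.
by apply: homog_QB; apply: hmx_munit.
Qed.
End DerivedOffDiagonal.

Lemma dsq_QA_sum (I : Type) (r : seq I) (P : pred I) (F : I -> 'M[R]_n) :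
  (forall i, P i -> dsq (QA (F i))) -> dsq (QA (\sum_(i <- r | P i) F i)).
Proof.
move=> hF; rewrite (big_morph (fun M => QA M) QAD (qmat0 S n)).
by apply: big_ind => //; [exact: dsq0|exact: dsqD].
Qed.
Lemma dsq_QB_sum (I : Type) (r : seq I) (P : pred I) (F : I -> 'M[R]_n) :
  (forall i, P i -> dsq (QB (F i))) -> dsq (QB (\sum_(i <- r | P i) F i)).
Proof.
move=> hF; rewrite (big_morph (fun M => QB M) QBD (qmat0 S n)).
by apply: big_ind => //; [exact: dsq0|exact: dsqD].
Qed.

(* With two distinct indices i0 != i1 (so n >= 2), every index has a
   partner, and by additivity homogeneity of the entries can be dropped. *)
Variables (i0 i1 : 'I_n).
Hypothesis i01 : i0 != i1.

Lemma exists_other (i : 'I_n) : exists j, i != j.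
Proof. by case: (eqVneq i i0) => [->|ne]; [exists i1|exists i0]. Qed.

Lemma dsq_even i j a : dsq (QA (munit i j a)).
Proof.
elim/(homog_split (S := S)): a => [x y hx hy|p a ha].
  by rewrite munitD QAD; apply: dsqD.
have [<-|ne] := eqVneq i j; last exact: (dsq_even_unit ne ha).
by have [j' ne] := exists_other i; apply: (dsq_even_diag ne ha).
Qed.

Lemma dsq_odd_offdiag i j b : i != j -> dsq (QB (munit i j b)).
Proof.
move=> ne; elim/(homog_split (S := S)): b => [x y hx hy|p b hb].
  by rewrite munitD QBD; apply: dsqD.
exact: (dsq_odd_unit ne hb).
Qed.

Lemma dsq_odd_diag_diff i j b : i != j -> dsq (QB (munit i i b - munit j j b)).
Proof.
move=> ne; elim/(homog_split (S := S)): b => [x y hx hy|p b hb].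
  by rewrite !munitD opprD addrACA QBD; apply: dsqD.
exact: (dsq_odd_diff ne hb).
Qed.

Lemma dsq_odd_trace x : commRR S x -> dsq (QB (munit i0 i0 x)).
Proof.
apply: (kspan_ind (Q := fun x => dsq (QB (munit i0 i0 x)))).
- by rewrite munit0 qmat0; apply: dsq0.
- by move=> x1 y1 hx hy; rewrite munitD QBD; apply: dsqD.
- move=> c x1 hx; rewrite -kscale_munit.
  have <- : map_mx (fun x : R => c *: x) (0 : 'M[R]_n) = 0.
    by apply/matrixP => r t; rewrite !mxE scaler0.
  by rewrite -kscale_qmat; apply: dsq_kscale.
- by move=> x1 [pa [pb [a [b [ha [hb ->]]]]]]; apply: (dsq_odd_scomm i01 ha hb).
Qed.

(* The trace form is contained in the derived algebra: decompose
   B = sum_{i != j} e_ij(B_ij) + sum_i (e_ii(B_ii) - e_i0i0(B_ii)) + e_i0i0(tr B). *)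
Lemma qtr_sub_dsq X : in_qtr S X -> dsq X.
Proof.
move=> [A [B [-> hB]]].
have -> : Q A B = QA A + QB B by rewrite qmatD addr0 add0r.
apply: dsqD.
  by rewrite (munit_decomp A); apply: dsq_QA_sum => i _; apply: dsq_QA_sum => j _;
    apply: dsq_even.
have -> : B = \sum_i (\sum_(j | j != i) munit i j (B i j)
                       + (munit i i (B i i) - munit i0 i0 (B i i)))
              + munit i0 i0 (\tr B).
  rewrite /mxtrace (big_morph (munit i0 i0) (munitD i0 i0) (munit0 R i0 i0)) -big_split /=.
  rewrite {1}(munit_decomp B); apply: eq_bigr => i _.
  by rewrite -addrA subrK (bigD1 i) //= addrC.
rewrite QBD; apply: dsqD; last exact: dsq_odd_trace.
apply: dsq_QB_sum => i _; rewrite QBD; apply: dsqD.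
  by apply: dsq_QB_sum => j ji; apply: dsq_odd_offdiag; rewrite eq_sym.
have [->|ne] := eqVneq i i0; first by rewrite subrr qmat0; apply: dsq0.
exact: dsq_odd_diag_diff.
Qed.

End Generation.

Unset Implicit Arguments.

Theorem corollary2p2 (k : comPzRingType) (R : algType k) (S : superalgebra R)
    (n : nat) :
  (exists h : k, 2%:R * h = 1) -> (2 <= n)%N ->
  (forall X : gl R n, lie_comm S (in_sq S (n:=n)) X <-> in_sq S X) /\
  (forall X : gl R n, in_sq S X <->
     exists A B : 'M[R]_n, X = qmat S A B /\ commRR S (\tr B)).
Proof.
move=> [h h2] n_ge2.
pose i0 : 'I_n := Ordinal (ltnW n_ge2); pose i1 : 'I_n := Ordinal n_ge2.
have qtr_dsq := qtr_sub_dsq h2 (i0 := i0) (i1 := i1) isT.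
split => X; split.
- exact: dsq_sub_sq.
- by move/sq_sub_qtr/qtr_dsq.
- exact: sq_sub_qtr.
- by move/qtr_dsq/dsq_sub_sq.
Qed.
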